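(* Let $n\ge3$, $0<\epsilon<1$, and define $\alpha,\beta,\gamma,\delta$ and the polynomial $Q(\rho)$ as in the context. If $\epsilon>0$ is sufficiently small, then: (1) $Q(1) = Q'(1) = 0$ and $Q''(1) = 2$; (2) $Q(\epsilon) = 0$ and $Q'(\epsilon) = \epsilon^{n-2}(1-\epsilon)$.
   Context: $D(\epsilon) = -n\epsilon^{n+2} + (n+2)\epsilon^{n+1} + n - (n+2)\epsilon$, $N(\epsilon) = -n\epsilon^{n+1} + (n+1)\epsilon^n - 1$, $K(\epsilon) = -1 + \frac{n+1}{n-1}\epsilon - \epsilon^{n-1} + \frac{n-3}{n-1}\epsilon^n$, $M(\epsilon) = \frac{\epsilon^{n+1}-1}{n(n+1)} + \frac{\epsilon-\epsilon^n}{n(n-1)}$; $\delta = \Big(\epsilon^{n-2}(1-\epsilon) - \frac{(n+2)N K}{D} + \frac{n(n-3)}{n-1}\epsilon^{n-1} - (n-1)\epsilon^{n-2} + \frac{n+1}{n-1}\Big)\Big(\frac{(n+2)N}{D}M + \frac{-(n-1)\epsilon^n + n\epsilon^{n-1}-1}{n(n-1)}\Big)^{-1}$, $\gamma = n(n+1)(n+2)(M\delta + K)/D$, $\alpha = -1 - \frac{\delta}{n(n+1)} - \frac{\gamma}{(n+1)(n+2)}$, $\beta = \frac{n+1}{n-1} + \frac{\delta}{n(n-1)} + \frac{\gamma}{n(n+1)}$ (denominators are nonzero for small $\epsilon$); $P(\rho) = -\frac{2n+\delta}{n(n-1)} + \frac{(\delta-\gamma)\rho}{n(n+1)} + \frac{\gamma\rho^2}{(n+1)(n+2)}$,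 $Q(\rho) = \rho^{n-1} - \rho^n - \rho^nP(\rho) - \alpha - \beta\rho$. *)

From HB Require Import structures.
From mathcomp Require Import all_boot all_order all_algebra.
Set Implicit Arguments. Unset Strict Implicit. Unset Printing Implicit Defensive.
Import Order.TTheory GRing.Theory Num.Theory.
Local Open Scope ring_scope.

Section Lemma47Defs.
Variables (R : realFieldType) (n : nat) (e : R).

Definition nR : R := n%:R.

Definition Dd : R :=
  - nR * e ^+ n.+2 + (nR + 2) * e ^+ n.+1 + nR - (nR + 2) * e.
Definition Nn : R := - nR * e ^+ n.+1 + (nR + 1) * e ^+ n - 1.
Definition Kk : R :=
  -1 + (nR + 1) / (nR - 1) * e - e ^+ n.-1 + (nR - 3) / (nR - 1) * e ^+ n.
Definition Mm : R :=
  (e ^+ n.+1 - 1) / (nR * (nR + 1)) + (e - e ^+ n) / (nR * (nR - 1)).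

Definition delta : R :=
  (e ^+ (n - 2) * (1 - e) - (nR + 2) * Nn * Kk / Dd
     + nR * (nR - 3) / (nR - 1) * e ^+ n.-1 - (nR - 1) * e ^+ (n - 2)
     + (nR + 1) / (nR - 1))
  * ((nR + 2) * Nn / Dd * Mm
     + (- (nR - 1) * e ^+ n + nR * e ^+ n.-1 - 1) / (nR * (nR - 1)))^-1.

Definition gamma : R :=
  nR * (nR + 1) * (nR + 2) * (Mm * delta + Kk) / Dd.

Definition alpha : R :=
  -1 - delta / (nR * (nR + 1)) - gamma / ((nR + 1) * (nR + 2)).

Definition beta : R :=
  (nR + 1) / (nR - 1) + delta / (nR * (nR - 1)) + gamma / (nR * (nR + 1)).

Definition Ppoly : {poly R} :=
  (- (2 * nR + delta) / (nR * (nR - 1)))%:P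
  + ((delta - gamma) / (nR * (nR + 1))) *: 'X
  + (gamma / ((nR + 1) * (nR + 2))) *: 'X^2.

Definition Qpoly : {poly R} :=
  'X^(n.-1) - 'X^n - 'X^n * Ppoly - alpha%:P - beta *: 'X.

End Lemma47Defs.

From HB Require Import structures.
From mathcomp Require Import all_boot all_order all_algebra ring lra.
Import Order.TTheory GRing.Theory Num.Theory.
Local Open Scope ring_scope.

(* Once alpha and beta are eliminated, Q(1) = Q'(1) = 0 and Q''(1) = 2 hold
   identically in delta and gamma. At rho = e both Q(e) and
   Q'(e) - e^(n-2)(1 - e) are affine in (delta, gamma): the first is
   D gamma / (n(n+1)(n+2)) - M delta - K, which the definition of gamma
   cancels, and after substituting gamma the second becomes W delta - Z,
   where delta = Z / W. Both steps only need D != 0 and W != 0. As e -> 0,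
   D -> n > 0 and W D n(n-1)(n+1) -> -2; with y = e^(n-2) <= e this is made
   quantitative by an explicit polynomial bound. *)

Definition delta_num {R : realFieldType} (n : nat) (e : R) : R :=
  e ^+ (n - 2) * (1 - e) - (nR R n + 2) * Nn n e * Kk n e / Dd n e
  + nR R n * (nR R n - 3) / (nR R n - 1) * e ^+ n.-1
  - (nR R n - 1) * e ^+ (n - 2) + (nR R n + 1) / (nR R n - 1).

Definition delta_den {R : realFieldType} (n : nat) (e : R) : R :=
  (nR R n + 2) * Nn n e / Dd n e * Mm n e
  + (- (nR R n - 1) * e ^+ n + nR R n * e ^+ n.-1 - 1) / (nR R n * (nR R n - 1)).

Lemma delta_den_mul_delta {R : realFieldType} (n : nat) (e : R) :
  delta_den n e != 0 -> delta_den n e * delta n e = delta_num n e.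
Proof. by move=> W0; rewrite mulrC divfK. Qed.

(* [Dd] and [delta_den * Dd * n(n-1)(n+1)] as polynomials in [N = n],
   [e] and [y = e^(n-2)]. *)
Definition Dd_poly {R : realFieldType} (N e y : R) : R :=
  - N * (y * e ^+ 4) + (N + 2) * (y * e ^+ 3) + N - (N + 2) * e.

Definition delta_den_cleared {R : realFieldType} (N e y : R) : R :=
  (N + 2) * (- N * (y * e ^+ 3) + (N + 1) * (y * e ^+ 2) - 1)
    * ((y * e ^+ 3 - 1) * (N - 1) + (e - y * e ^+ 2) * (N + 1))
  + (- (N - 1) * (y * e ^+ 2) + N * (y * e) - 1) * Dd_poly N e y * (N + 1).

Section Evaluation.
Variables (R : realFieldType) (n : nat) (e : R).
Local Notation N := (nR R n.+2).

Lemma nR_shift_neq0 : [/\ N != 0, N - 1 != 0, N + 1 != 0 & N + 2 != 0].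
Proof.
have N_ge2 : 2 <= N by rewrite /nR ler_nat.
by split; apply/eqP; lra.
Qed.

Lemma mulrn_nR (x : R) : x *+ n.+2 = x * N.
Proof. by rewrite mulr_natr. Qed.

Lemma mulrn_pred_nR (x : R) : x *+ n.+1 = x * (N - 1).
Proof. by rewrite /nR -[n.+2%:R]natr1 addrK mulr_natr. Qed.

Lemma natr_pred2_nR : n%:R = N - 2.
Proof. by rewrite /nR -[n.+2%:R]natr1 -[n.+1%:R]natr1; ring. Qed.

(* In the proofs below [N] is generalized before calling [field], which would
   otherwise normalize the cast [n.+2%:R] and state its side conditions in
   terms of [n%:R]. *)
Lemma Qpoly_at1 :
  [/\ (Qpoly n.+2 e).[1] = 0, ((Qpoly n.+2 e)^`()).[1] = 0
    & ((Qpoly n.+2 e)^`(2)).[1] = 2].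
Proof.
rewrite /Qpoly /Ppoly /alpha /beta; move: (delta n.+2 e) (gamma n.+2 e) => d g.
rewrite !derivnS derivn0 !(derivXn, derivMn, derivE).
rewrite !(hornerMn, hornerD, hornerN, hornerXn, hornerZ, hornerX, hornerC,
          hornerM, hornerMX) !expr1n ?succnK.
rewrite !mulrn_nR !mulrn_pred_nR natr_pred2_nR.
have [N0 N1 N2 N3] := nR_shift_neq0; move: N N0 N1 N2 N3 => N N0 N1 N2 N3.
by split; field; rewrite N0 N1 N2 N3.
Qed.

Lemma horner_Qpoly_e :
  (Qpoly n.+2 e).[e] =
  Dd n.+2 e * gamma n.+2 e / (N * (N + 1) * (N + 2))
  - Mm n.+2 e * delta n.+2 e - Kk n.+2 e.
Proof.
rewrite /Qpoly /Ppoly /alpha /beta /Dd /Mm /Kk.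
move: (delta n.+2 e) (gamma n.+2 e) => d g.
rewrite !(hornerD, hornerN, hornerXn, hornerZ, hornerX, hornerC, hornerM).
rewrite ?succnK !exprS expr0.
have [N0 N1 N2 N3] := nR_shift_neq0; move: N N0 N1 N2 N3 => N N0 N1 N2 N3.
by field; rewrite N0 N1 N2 N3.
Qed.

Lemma horner_deriv_Qpoly_e :
  ((Qpoly n.+2 e)^`()).[e] =
  e ^+ n * (1 - e) + (delta_den n.+2 e * delta n.+2 e - delta_num n.+2 e).
Proof.
rewrite /Qpoly /Ppoly /alpha /beta /gamma /delta_den /delta_num.
(* [Dd] only occurs inverted, so it need not be nonzero. *)
move: (delta n.+2 e) (Dd n.+2 e)^-1 => d iD.
rewrite /Nn /Mm /Kk !(derivXn, derivMn, derivE).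
rewrite !(hornerMn, hornerD, hornerN, hornerXn, hornerZ, hornerX, hornerC,
          hornerM, hornerMX).
rewrite subn2 ?succnK !mulrn_nR !mulrn_pred_nR.
rewrite !exprS expr0.
have [N0 N1 N2 N3] := nR_shift_neq0; move: N N0 N1 N2 N3 => N N0 N1 N2 N3.
by field; rewrite N0 N1 N2 N3.
Qed.

Lemma Dd_mul_gamma :
  Dd n.+2 e != 0 ->
  Dd n.+2 e * gamma n.+2 e / (N * (N + 1) * (N + 2))
  = Mm n.+2 e * delta n.+2 e + Kk n.+2 e.
Proof.
move=> D0; rewrite /gamma.
move: (Dd n.+2 e) D0 (Mm n.+2 e) (Kk n.+2 e) (delta n.+2 e) => D D0 M K d.
have [N0 _ N2 N3] := nR_shift_neq0; move: N N0 N2 N3 => N N0 N2 N3.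
by field; repeat (apply/andP; split).
Qed.

Lemma Qpoly_at_e :
  Dd n.+2 e != 0 -> delta_den n.+2 e != 0 ->
  (Qpoly n.+2 e).[e] = 0 /\ ((Qpoly n.+2 e)^`()).[e] = e ^+ n * (1 - e).
Proof.
move=> D0 W0; rewrite horner_Qpoly_e horner_deriv_Qpoly_e.
by rewrite Dd_mul_gamma // delta_den_mul_delta //; split; ring.
Qed.

Lemma DdE : Dd n.+2 e = Dd_poly N e (e ^+ n).
Proof. by rewrite /Dd /Dd_poly -!exprD addn4 addn3. Qed.

Lemma delta_den_clearedE :
  Dd n.+2 e != 0 ->
  delta_den n.+2 e
  = delta_den_cleared N e (e ^+ n) / (Dd n.+2 e * (N * (N - 1) * (N + 1))).
Proof.
move=> D0; rewrite /delta_den_cleared -DdE /delta_den /Nn /Mm ?succnK.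
rewrite !exprS expr0.
have [N0 N1 N2 N3] := nR_shift_neq0.
move: (Dd n.+2 e) D0 => D D0; move: N N0 N1 N2 N3 => N N0 N1 N2 N3.
by field; repeat (apply/andP; split).
Qed.

End Evaluation.

Definition eps_denom {R : realFieldType} (N : R) : R :=
  4 + 6 * N + 8 * N ^+ 2 + 4 * N ^+ 3.

Lemma small_eps_bound {R : realFieldType} {N e : R} :
  0 <= N -> 0 <= e -> e * eps_denom N < 1 -> (4 + 6 * N) * e < 1.
Proof.
move=> N_ge0 e_ge0; rewrite /eps_denom.
have : 0 <= e * (8 * N ^+ 2 + 4 * N ^+ 3).
  by rewrite mulr_ge0 // addr_ge0 // mulr_ge0 // exprn_ge0.
lra.
Qed.

Lemma Dd_poly_gt0 {R : realFieldType} (N e y : R) :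
  1 <= N -> 0 <= e -> 0 <= y -> e * eps_denom N < 1 -> 0 < Dd_poly N e y.
Proof.
move=> N_ge1 e_ge0 y_ge0 small_e.
have N_ge0 : 0 <= N by lra.
have small_e' := small_eps_bound N_ge0 e_ge0 small_e.
have Ne_ge0 := mulr_ge0 N_ge0 e_ge0.
have : 0 <= y * e ^+ 3 * (N + 2 - N * e).
  by rewrite !mulr_ge0 ?exprn_ge0 //; lra.
have -> : Dd_poly N e y = y * e ^+ 3 * (N + 2 - N * e) + (N - (N + 2) * e).
  by rewrite /Dd_poly; ring.
lra.
Qed.

Lemma delta_den_cleared_lt0 {R : realFieldType} (N e y : R) :
  0 <= N -> 0 < e -> 0 <= y <= e -> e * eps_denom N < 1 ->
  delta_den_cleared N e y < 0.
Proof.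
move=> N_ge0 e_gt0 /andP[y_ge0 y_le_e] small_e.
have e_ge0 := ltW e_gt0.
set A := 4*e + 3*N*e + N^+2 + 5*N^+2*e^+2 + N^+3 + 3*N^+3*e^+2.
set B := 2*N + N*e + 2*N^+2.
set S := y*(2*N*e^+3 + N*e^+4 + 4*N^+2*e^+2 + 2*N^+2*e^+4 + 3*N^+3*e^+2 + N^+3*e^+4)
  + y^+2*(2*e^+4 + 3*N*e^+4 + N^+2*e^+4 + N^+2*e^+6).
have -> : delta_den_cleared N e y = -2 + y*e*(A + y*e^+4*B) - S.
  by rewrite /delta_den_cleared /Dd_poly /A /B /S; ring.
have N2 : 0 <= N^+2 := exprn_ge0 2 N_ge0.
have N3 : 0 <= N^+3 := exprn_ge0 3 N_ge0.
have e_le1 : e <= 1.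
  have := small_eps_bound N_ge0 e_ge0 small_e.
  have := mulr_ge0 N_ge0 e_ge0; lra.
have e2 : e^+2 <= 1 by rewrite expr_le1.
have y_le1 : y <= 1 := le_trans y_le_e e_le1.
have S_ge0 : 0 <= S by rewrite /S !(addr_ge0, mulr_ge0, exprn_ge0).
have A_ge0 : 0 <= A by rewrite /A; nra.
have B_ge0 : 0 <= B by rewrite /B; nra.
have A_le : A <= 4 + 3*N + 6*N^+2 + 4*N^+3 by rewrite /A; nra.
have B_le : y*e^+4*B <= 3*N + 2*N^+2.
  have e4 : e^+4 <= 1 by rewrite expr_le1.
  have ye4 : y*e^+4 <= 1 := mulr_ile1 y_ge0 (exprn_ge0 4 e_ge0) y_le1 e4.
  apply: le_trans (ler_piMl B_ge0 ye4) _.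
  have Ne : N * e <= N := ler_piMr N_ge0 e_le1.
  by rewrite /B; lra.
have ye_le : y*e <= e := ler_piMl e_ge0 y_le1.
have : y*e*(A + y*e^+4*B) <= e * eps_denom N.
  have -> : eps_denom N = (4 + 3*N + 6*N^+2 + 4*N^+3) + (3*N + 2*N^+2).
    by rewrite /eps_denom; ring.
  apply: (ler_pM _ _ ye_le (lerD A_le B_le)); first exact: mulr_ge0.
  by rewrite addr_ge0 // !mulr_ge0 // exprn_ge0.
lra.
Qed.

Theorem lemma4p7 (R : realFieldType) (n : nat) (hn : (3 <= n)%N) :
  exists eps0 : R, 0 < eps0 /\
    forall e : R, 0 < e -> e < eps0 -> e < 1 ->
      [/\ (Qpoly n e).[1] = 0,
          ((Qpoly n e)^`()).[1] = 0,
          ((Qpoly n e)^`(2)).[1] = 2,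
          (Qpoly n e).[e] = 0
        & ((Qpoly n e)^`()).[e] = e ^+ (n - 2) * (1 - e)].
Proof.
case: n hn => [|[|[|m]]] // _.
set N := nR R m.+3.
have N_ge3 : 3 <= N by rewrite /N /nR ler_nat.
have denom_gt0 : 0 < eps_denom N.
  by rewrite /eps_denom; have := exprn_ge0 2 (ler0n R m.+3); nra.
exists (eps_denom N)^-1; split; first by rewrite invr_gt0.
move=> e e_gt0 e_small e_lt1.
have small_e : e * eps_denom N < 1 by rewrite -ltr_pdivlMr // mul1r.
have D_gt0 : 0 < Dd m.+3 e.
  by rewrite DdE Dd_poly_gt0 ?exprn_ge0 ?ltW //; lra.
have W_lt0 : delta_den m.+3 e < 0.
  have y_le_e : e ^+ m.+1 <= e by rewrite exprSr ler_piMl ?exprn_ile1 // ltW.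
  rewrite delta_den_clearedE ?lt0r_neq0 // ltr_pdivrMr ?mul0r.
    by apply: delta_den_cleared_lt0; rewrite // y_le_e exprn_ge0 // ltW.
  by rewrite -/N mulr_gt0 // !mulr_gt0 //; lra.
have [Q1 DQ1 D2Q1] := Qpoly_at1 R m.+1 e.
by have [Qe DQe] := Qpoly_at_e R m.+1 e (lt0r_neq0 D_gt0) (ltr0_neq0 W_lt0).
Qed.
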